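(* Consider a finite two-player zero-sum Markov game $(S,A,B,p,r,\alpha)$ with discount factor $\alpha\in[0,1)$ and $R_{\max}=\max_{i,a,b}|r(i,a,b)|$. Let $(\theta_n)_{n\ge 0}$ be a real sequence with $0\le\theta_n\le 1$ and $\theta_n$ decreasing monotonically to $0$, and let step sizes $\beta_n(i,a,b)\in[0,1]$ be given, with $\bar\beta_n:=\max_{(i,a,b)}\beta_n(i,a,b)$ satisfying $\sum_{n}\bar\beta_n\theta_n<\infty$. Let $(Q_n)$ be generated by the two-step minimax Q-learning (TMQL) iteration described in the context, with $\|Q_0\|\le \frac{R_{\max}}{1-\alpha}$. Then for every $n\in\mathbb{N}$, $$\|Q_n\|\le \frac{R_{\max}}{1-\alpha}(1+\alpha\theta_0)\prod_{m=1}^{n-1}(1+\bar\beta_m\theta_m\alpha^2)\le M,\qquad M:=\frac{R_{\max}}{1-\alpha}(1+\alpha\theta_0)\prod_{m=1}^{\infty}(1+\bar\beta_m\theta_m\alpha^2)<\infty.$$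
   Context: A two-player zero-sum Markov game is $(S,A,B,p,r,\alpha)$ with finite state set $S$, finite action sets $A$ (player 1) and $B$ (player 2), transition probabilities $p(j\mid i,a,b)$, deterministic reward $r(i,a,b)\in\mathbb{R}$ to player 1 (player 2 receives $-r$), and discount $\alpha\in[0,1)$. Norms are max-norms: $\|z\|=\max_k|z(k)|$. For $Q\in\mathbb{R}^{S\times A\times B}$ and $i\in S$, $Q(i)$ denotes the $|A|\times|B|$ matrix $(Q(i,a,b))_{a,b}$, and for an $|A|\times|B|$ matrix $M$, $\mathrm{val}[M]:=\min_{y\in\Delta^{|B|}}\max_{x\in\Delta^{|A|}}x^{T}My$, where $\Delta^{m}$ is the probability simplex in $\mathbb{R}^m$. TMQL iteration: at each step $n$, a sample $(i,a,b,j,c,d,k)$ is generated, where $j\sim p(\cdot\mid i,a,b)$, actions $c\in A,d\in B$ are chosen at $j$, and $k\sim p(\cdot\mid j,c,d)$; then $Q_{n+1}(i,a,b)=(1-\beta_n(i,a,b))Q_n(i,a,b)+\beta_n(i,a,b)\big(r(i,a,b)+\alpha\,\mathrm{val}[Q_n(j)]+\alpha\theta_n(r(j,c,d)+\alpha\,\mathrm{val}[Q_n(k)])\big)$, and all other components are left unchanged ($Q_{n+1}(i',a',b')=Q_n(i',a',b')$ for $(i',a',b')\neq(i,a,b)$). *)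

From HB Require Import structures.
From mathcomp Require Import all_boot all_order all_algebra.
From mathcomp Require Import all_classical all_reals all_analysis.
Set Implicit Arguments. Unset Strict Implicit. Unset Printing Implicit Defensive.
Import Order.TTheory GRing.Theory Num.Theory.
Local Open Scope classical_set_scope.
Local Open Scope ring_scope.

Section Defs.
Variable R : realType.

Definition simplex (T : finType) : set (T -> R) :=
  [set x | (forall t, 0 <= x t) /\ \sum_(t : T) x t = 1].

Definition bilin (A B : finType) (M : A -> B -> R) (x : A -> R) (y : B -> R) : R :=
  \sum_(a : A) \sum_(b : B) x a * M a b * y b.

(* val[M] = min_{y in simplex B} max_{x in simplex A} x^T M y
   (min/max written as inf/sup, which are attained here) *)
Definition mval (A B : finType) (M : A -> B -> R) : R :=
  inf [set sup [set bilin M x y | x in @simplex A] | y in @simplex B].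

Definition qnorm (S A B : finType) (Q : S -> A -> B -> R) : R :=
  \big[Num.max/0]_(i : S) \big[Num.max/0]_(a : A) \big[Num.max/0]_(b : B) `|Q i a b|.

Definition Rmax (S A B : finType) (r : S -> A -> B -> R) : R := qnorm r.

Definition betabar (S A B : finType) (beta : nat -> S -> A -> B -> R) (n : nat) : R :=
  \big[Num.max/0]_(i : S) \big[Num.max/0]_(a : A) \big[Num.max/0]_(b : B) beta n i a b.

End Defs.

(* Write D := Rmax / (1 - alpha), so that Rmax + alpha D = D, and C := D (1 + alpha theta_0).
   An entry of Q_{n+1} is either an entry of Q_n or a convex combination, with weight
   beta <= betabar_n, of an entry of Q_n and a target built from two rewards and two
   matrix-game values; a matrix-game value is bounded by the max-norm of its matrix.
   From ||Q_0|| <= D the first step gives ||Q_1|| <= C.  Afterwards, whenever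
   ||Q_n|| <= K with K >= C, the target is at most K + alpha^2 theta_n K, so
   ||Q_{n+1}|| <= (1 + betabar_n theta_n alpha^2) K.  The resulting partial products are
   bounded by exp (alpha^2 sum_n betabar_n theta_n), hence converge. *)
From HB Require Import structures.
From mathcomp Require Import all_boot all_order all_algebra.
From mathcomp Require Import all_classical all_reals all_analysis.
From mathcomp Require Import lra.
Set Implicit Arguments. Unset Strict Implicit. Unset Printing Implicit Defensive.
Import Order.TTheory GRing.Theory Num.Theory numFieldNormedType.Exports.
Local Open Scope classical_set_scope.
Local Open Scope ring_scope.

Section MaxNorm.
Variables (R : realType) (S A B : finType).

Lemma bigmax0_ge0 (I : finType) (f : I -> R) : 0 <= \big[Num.max/0]_(i : I) f i.
Proof. by elim/big_rec: _ => // i x _ hx; rewrite le_max hx orbT. Qed.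

Lemma qnorm_ge0 (Q : S -> A -> B -> R) : 0 <= qnorm Q.
Proof. exact: bigmax0_ge0. Qed.

Lemma ler_qnorm (Q : S -> A -> B -> R) i a b : `|Q i a b| <= qnorm Q.
Proof.
apply: le_trans (le_bigmax _ _ i); apply: le_trans (le_bigmax _ _ a).
exact: le_bigmax.
Qed.

Lemma qnorm_le (Q : S -> A -> B -> R) K :
  0 <= K -> (forall i a b, `|Q i a b| <= K) -> qnorm Q <= K.
Proof.
move=> K0 QK; apply: bigmax_le => // i _; apply: bigmax_le => // a _.
by apply: bigmax_le => // b _; apply: QK.
Qed.

Lemma betabar_ge0 (beta : nat -> S -> A -> B -> R) n : 0 <= betabar beta n.
Proof. exact: bigmax0_ge0. Qed.

Lemma ler_betabar (beta : nat -> S -> A -> B -> R) n i a b :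
  beta n i a b <= betabar beta n.
Proof.
apply: le_trans (le_bigmax _ _ i); apply: le_trans (le_bigmax _ _ a).
exact: le_bigmax.
Qed.

Lemma betabar_le1 (beta : nat -> S -> A -> B -> R) n :
  (forall i a b, beta n i a b <= 1) -> betabar beta n <= 1.
Proof.
move=> b1; apply: bigmax_le => // i _; apply: bigmax_le => // a _.
by apply: bigmax_le => // b _; apply: b1.
Qed.

End MaxNorm.

Section MatrixGameValue.
Variable R : realType.

(* The empty case needs [0 <= K], because [sup set0 = 0]. *)
Lemma norm_sup_le (E : set R) K :
  0 <= K -> (forall e, E e -> `|e| <= K) -> `|sup E| <= K.
Proof.
move=> K0 EK; have [[e Ee]|/nonemptyPn->] := pselect (E !=set0); last first.
  by rewrite sup0 normr0.
have ubK : ubound E K by move=> x /EK; rewrite ler_norml => /andP[].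
rewrite ler_norml ge_sup ?andbT; [|by exists e|by []].
have := EK e Ee; rewrite ler_norml => /andP[/le_trans-> //].
by apply: ub_le_sup => //; exists K.
Qed.

Lemma norm_inf_le (E : set R) K :
  0 <= K -> (forall e, E e -> `|e| <= K) -> `|inf E| <= K.
Proof.
move=> K0 EK; rewrite normrN; apply: norm_sup_le => // _ [e Ee <-].
by rewrite normrN; apply: EK.
Qed.

Lemma norm_bilin_le (A B : finType) (M : A -> B -> R) x y K :
  (forall a b, `|M a b| <= K) -> simplex x -> simplex y -> `|bilin M x y| <= K.
Proof.
move=> MK [x0 x1] [y0 y1]; apply: le_trans (ler_norm_sum _ _ _) _.
apply: (@le_trans _ _ (\sum_a \sum_b x a * K * y b)).
  apply: ler_sum => a _; apply: le_trans (ler_norm_sum _ _ _) _.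
  apply: ler_sum => b _; rewrite !normrM (ger0_norm (x0 a)) (ger0_norm (y0 b)).
  by apply: ler_wpM2r => //; apply: ler_wpM2l.
under eq_bigr do rewrite -mulr_sumr y1 mulr1.
by rewrite -mulr_suml x1 mul1r.
Qed.

Lemma norm_mval_le (A B : finType) (M : A -> B -> R) K :
  0 <= K -> (forall a b, `|M a b| <= K) -> `|mval M| <= K.
Proof.
move=> K0 MK; apply: norm_inf_le => // _ [y Hy <-].
by apply: norm_sup_le => // _ [x Hx <-]; apply: norm_bilin_le.
Qed.

End MatrixGameValue.

Lemma norm_convex_le (R : numDomainType) (w q t K T : R) :
  0 <= w <= 1 -> `|q| <= K -> `|t| <= T -> `|(1 - w) * q + w * t| <= (1 - w) * K + w * T.
Proof.
move=> /andP[w0 w1] qK tT; have w1' : 0 <= 1 - w by rewrite subr_ge0.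
apply: le_trans (ler_normD _ _) _; rewrite !normrM (ger0_norm w1') (ger0_norm w0).
by apply: lerD; apply: ler_wpM2l.
Qed.

Section ProductOfOnePlus.
Variables (R : realType) (x : nat -> R) (k : nat).
Hypothesis x_ge0 : forall m, 0 <= x m.

Lemma prod1D_ge1 n : 1 <= \prod_(k <= m < n) (1 + x m).
Proof. by elim/big_rec: _ => // m y _ y1; rewrite mulr_ege1 // lerDl. Qed.

Lemma nondecreasing_prod1D : nondecreasing_seq (fun n => \prod_(k <= m < n) (1 + x m)).
Proof.
apply/nondecreasing_seqP => n; have [kn|nk] := leqP k n.
  by rewrite big_nat_recr //= ler_peMr ?lerDl ?(le_trans _ (prod1D_ge1 n)).
by rewrite big_geq ?prod1D_ge1 // ltnW.
Qed.

Lemma prod1D_le_expR n : \prod_(k <= m < n) (1 + x m) <= expR (\sum_(k <= m < n) x m).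
Proof.
rewrite expR_sum; apply: ler_prod => m _.
by rewrite addr_ge0 ?expR_ge1Dx.
Qed.

Lemma is_cvg_prod1D : cvgn (series x) -> cvgn (fun n => \prod_(k <= m < n) (1 + x m)).
Proof.
move=> xcv; apply: nondecreasing_is_cvgn; first exact: nondecreasing_prod1D.
exists (expR (limn (series x))) => _ [n _ <-].
apply: le_trans (prod1D_le_expR n) _; rewrite ler_expR.
apply: le_trans (nondecreasing_cvgn_le _ xcv n); last exact: nondecreasing_series.
have [kn|nk] := leqP k n; last by rewrite big_geq ?sumr_ge0 // ltnW.
by rewrite /series /= [leRHS](@big_cat_nat _ _ _ k) //= lerDr sumr_ge0.
Qed.

End ProductOfOnePlus.

Section TMQLBound.
Variables (R : realType) (S A B : finType) (r : S -> A -> B -> R) (alpha : R).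
Variables (theta : nat -> R) (beta : nat -> S -> A -> B -> R).
Variables (Q : nat -> S -> A -> B -> R).
Variables (si : nat -> S) (sa : nat -> A) (sb : nat -> B) (sj : nat -> S).
Variables (sc : nat -> A) (sd : nat -> B) (sk : nat -> S).
Hypothesis alpha_ge0 : 0 <= alpha.
Hypothesis theta_ge0 : forall n, 0 <= theta n.
Hypothesis beta01 : forall n i a b, 0 <= beta n i a b <= 1.
Hypothesis tmqlE : forall n i a b, Q n.+1 i a b =
  if (i == si n) && (a == sa n) && (b == sb n) then
    (1 - beta n i a b) * Q n i a b
    + beta n i a b * (r i a b + alpha * mval (Q n (sj n))
        + alpha * theta n * (r (sj n) (sc n) (sd n) + alpha * mval (Q n (sk n))))
  else Q n i a b.

Lemma qnorm_tmqlS n K E :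
  0 <= K -> qnorm (Q n) <= K -> 0 <= E ->
  Rmax r + alpha * K + alpha * theta n * (Rmax r + alpha * K) <= K + E ->
  qnorm (Q n.+1) <= K + betabar beta n * E.
Proof.
move=> K0 QnK E0 targetE.
have KKE : K <= K + betabar beta n * E by rewrite lerDl mulr_ge0 ?betabar_ge0.
have QK i a b : `|Q n i a b| <= K by apply: le_trans (ler_qnorm _ _ _ _) QnK.
have mvalK j : `|mval (Q n j)| <= K by apply: norm_mval_le.
have rR i a b : `|r i a b| <= Rmax r by apply: ler_qnorm.
have stepR (u v c : R) : 0 <= c -> `|u| <= Rmax r -> `|v| <= K ->
    `|u + c * v| <= Rmax r + c * K.
  move=> c0 uR vK; apply: le_trans (ler_normD _ _) _.
  by rewrite normrM ger0_norm // lerD // ler_wpM2l.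
apply: qnorm_le => [|i a b]; first exact: le_trans KKE.
rewrite tmqlE; case: ifP => _; last exact: le_trans (QK i a b) KKE.
set T := Rmax r + alpha * K + _ in targetE.
have targetT : `|r i a b + alpha * mval (Q n (sj n))
    + alpha * theta n * (r (sj n) (sc n) (sd n) + alpha * mval (Q n (sk n)))| <= T.
  apply: le_trans (ler_normD _ _) _.
  rewrite normrM (@ger0_norm _ (alpha * theta n)) ?mulr_ge0 //.
  apply: lerD; first exact: stepR.
  by apply: ler_wpM2l; rewrite ?mulr_ge0 ?stepR.
apply: le_trans (norm_convex_le (beta01 n i a b) (QK i a b) targetT) _.
have /andP[w0 _] := beta01 n i a b; set w := beta n i a b in w0 *.
have wE : w * E <= betabar beta n * E by rewrite ler_wpM2r ?ler_betabar.
have := ler_wpM2l w0 targetE; lra.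
Qed.

Hypothesis alpha_lt1 : alpha < 1.
Hypothesis theta_noninc : forall n, theta n.+1 <= theta n.
Hypothesis Q0_le : qnorm (Q 0%N) <= Rmax r / (1 - alpha).

Lemma qnorm_tmql_le n :
  qnorm (Q n) <= Rmax r / (1 - alpha) * (1 + alpha * theta 0%N)
                 * \prod_(1 <= m < n) (1 + betabar beta m * theta m * alpha ^+ 2).
Proof.
set D := Rmax r / (1 - alpha); set C := D * _.
have alpha1 : 0 < 1 - alpha by rewrite subr_gt0.
have RmaxD : Rmax r = D * (1 - alpha) by rewrite /D mulrVK // unitfE gt_eqF.
have D0 : 0 <= D by rewrite divr_ge0 ?qnorm_ge0 ?ltW.
have DC : D <= C by rewrite ler_peMr // lerDl mulr_ge0.
have P1 m : 1 <= \prod_(1 <= j < m) (1 + betabar beta j * theta j * alpha ^+ 2).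
  by apply: prod1D_ge1 => j; rewrite !mulr_ge0 ?betabar_ge0 ?sqr_ge0.
have theta0 m : theta m <= theta 0%N.
  by elim: m => // m IH; apply: le_trans (theta_noninc m) IH.
case: n => [|n]; first by rewrite big_geq // mulr1 (le_trans Q0_le).
elim: n => [|n IH].
  rewrite big_geq // mulr1.
  have Q0D : qnorm (Q 0%N) <= D := Q0_le.
  apply: le_trans (qnorm_tmqlS (E := alpha * theta 0%N * D) D0 Q0D _ _) _.
  - by rewrite mulr_ge0 // mulr_ge0.
  - by rewrite RmaxD; lra.
  have b1 : betabar beta 0 <= 1.
    by apply: betabar_le1 => i a b; case/andP: (beta01 0 i a b).
  by rewrite /C mulrDr mulr1 lerD2l [D * _]mulrC ler_piMl // mulr_ge0 // mulr_ge0.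
set K := C * _ in IH.
have CK : C <= K by rewrite ler_peMr ?P1 ?(le_trans D0).
have K0 : 0 <= K by rewrite (le_trans D0) ?(le_trans DC).
have Cth : Rmax r * (1 + alpha * theta n.+1) <= (1 - alpha) * K.
  rewrite RmaxD -mulrA mulrCA ler_pM2l //; apply: le_trans CK.
  by apply: ler_wpM2l => //; rewrite lerD2l; apply: ler_wpM2l.
apply: le_trans (qnorm_tmqlS (E := alpha ^+ 2 * theta n.+1 * K) K0 IH _ _) _.
- by rewrite mulr_ge0 // mulr_ge0 // sqr_ge0.
- by rewrite expr2; lra.
by rewrite big_nat_recr //= [C * (_ * _)]mulrA -/K; lra.
Qed.

End TMQLBound.

Theorem mainTheorem1 (R : realType) (S A B : finType)
  (p : S -> A -> B -> S -> R) (r : S -> A -> B -> R) (alpha : R)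
  (theta : nat -> R) (beta : nat -> S -> A -> B -> R)
  (Q : nat -> S -> A -> B -> R)
  (si : nat -> S) (sa : nat -> A) (sb : nat -> B) (sj : nat -> S)
  (sc : nat -> A) (sd : nat -> B) (sk : nat -> S) :
  (forall i a b j, 0 <= p i a b j) ->
  (forall i a b, \sum_(j : S) p i a b j = 1) ->
  0 <= alpha -> alpha < 1 ->
  (forall n, 0 <= theta n <= 1) ->
  (forall n, theta n.+1 <= theta n) ->
  theta @ \oo --> (0 : R) ->
  (forall n i a b, 0 <= beta n i a b <= 1) ->
  cvgn (series (fun n => betabar beta n * theta n)) ->
  (forall n, 0 < p (si n) (sa n) (sb n) (sj n)) ->
  (forall n, 0 < p (sj n) (sc n) (sd n) (sk n)) ->
  qnorm (Q 0%N) <= Rmax r / (1 - alpha) ->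
  (forall n i a b, Q n.+1 i a b =
     if (i == si n) && (a == sa n) && (b == sb n) then
       (1 - beta n i a b) * Q n i a b
       + beta n i a b * (r i a b + alpha * mval (Q n (sj n))
           + alpha * theta n * (r (sj n) (sc n) (sd n) + alpha * mval (Q n (sk n))))
     else Q n i a b) ->
  let P := fun n : nat => \prod_(1 <= m < n) (1 + betabar beta m * theta m * alpha ^+ 2) in
  let C := Rmax r / (1 - alpha) * (1 + alpha * theta 0%N) in
  cvgn P /\
  forall n : nat, qnorm (Q n) <= C * P n /\ C * P n <= C * limn P.
Proof.
move=> _ _ alpha0 alpha1 theta01 theta_noninc _ beta01 sum_cvg _ _ Q0 tmqlE P C.
have theta0 n : 0 <= theta n by case/andP: (theta01 n).
have x0 m : 0 <= betabar beta m * theta m * alpha ^+ 2.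
  by rewrite !mulr_ge0 ?betabar_ge0 ?sqr_ge0.
have Pcv : cvgn P.
  apply: is_cvg_prod1D x0 _; have := is_cvg_seriesZ (k := alpha ^+ 2) sum_cvg.
  by congr (cvgn (series _)); apply/funext => m; rewrite /= mulrC.
have C0 : 0 <= C.
  apply: mulr_ge0; first by rewrite divr_ge0 ?qnorm_ge0 // subr_ge0 ltW.
  by rewrite addr_ge0 // mulr_ge0.
split=> // n; split; first exact: (qnorm_tmql_le alpha0 theta0 beta01 tmqlE).
by rewrite ler_wpM2l // nondecreasing_cvgn_le //; apply: nondecreasing_prod1D.
Qed.
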